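(* Let $F$ be a forest of rooted trees $T_1,\dots,T_k$ on $\{1,\dots,n\}$ (viewed as a shrub, with height equal to distance to the root), and let $i$ be the root of $T_1$. Then, for the anticyclic action, $\tau_{0,i}\cdot F=-\big(B_-(T_1)\sqcup B_+(i,T_2,\dots,T_k)\big)$, where $\tau_{0,i}\in\mathfrak{S}_{n+1}$ is the transposition of $0$ and $i$.
   Context: A shrub $P$ on a finite set $I$ is a set $E$ of edges with a height function $h_P:I\to\mathbb{N}$ satisfying: edges join vertices whose heights differ by $1$; every vertex of positive height covers some vertex ($j$ covers $i$ if $\{i,j\}\in E$ and $h(j)=h(i)+1$); no four distinct $a,b,c,d$ with $a$ covering $b,c$, $c$ covering $d$, $\{b,d\}\notin E$; no five distinct $a,b,c,d,e$ with $a$ covering $c,d$, $b$ covering $d,e$, $\{a,e\},\{b,c\}\notin E$. A forest of rooted trees is a shrub with height = distance to the root of its tree. For a forest $F$ of trees $T_1,\dots,T_k$ and a new vertex $j$, $B_+(j,F)=B_+(j,T_1,\dots,T_k)$ is the rooted tree obtained by joining the roots of the $T_l$ to a new root $j$; for a rooted tree $T$, $B_-(T)$ is the forest obtained by deleting the root of $T$. For a shrub $P$, $f_P\in\mathbb{Q}(u_1,\dots,u_n)$ is its image under the operad morphism $\kappa:\operatorname{Arb}\to\operatorname{Mould}$ determined by $\kappa([2\triangleleft1])=1/(u_1(u_1+u_2))$ and $\kappa([1][2])=1/(u_1u_2)$; for a forest $F$, $f_F=\prod_{j}1/u[\text{subtree of }F\text{ rooted at }j]$, where $u[S]=\sum_{k\in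 S}u_k$. $\mathfrak{S}_{n+1}$ (permutations of $\{0,\dots,n\}$) acts on $\mathbb{Q}(u_1,\dots,u_n)$ by setting $u_0=-(u_1+\dots+u_n)$ and permuting $u_0,\dots,u_n$. Signed shrubs are pairs $\pm P$; $\pm P\mapsto\pm f_P$ is injective with image stable under $\mathfrak{S}_{n+1}$, and the anticyclic action is $\sigma\cdot(\varepsilon P)=\varepsilon'P'$ where $\varepsilon'f_{P'}=\sigma\cdot(\varepsilon f_P)$. *)

From HB Require Import structures.
From mathcomp Require Import all_boot all_order all_algebra all_fingroup.
From mathcomp Require Import fraction.
From mathcomp Require Import mpoly.
Set Implicit Arguments. Unset Strict Implicit. Unset Printing Implicit Defensive.
Import GRing.Theory.
Local Open Scope ring_scope.

(* The field Q(u_1,...,u_n); the variable u_{k+1} is 'X_k for k : 'I_n. *)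
Definition RF (n : nat) := {fraction {mpoly rat[n]}}.

(* Variables u_0,...,u_n indexed by 'I_n.+1, with u_0 = -(u_1+...+u_n). *)
Definition uvar (n : nat) (k : 'I_n.+1) : {mpoly rat[n]} :=
  match unlift ord0 k with
  | Some j => 'X_j
  | None => - \sum_(j < n) 'X_j
  end.

(* Left action of S_{n+1} on polynomials by permuting u_0,...,u_n:
   (s . p)(u_1..u_n) = p(u_{s^-1(1)}, ..., u_{s^-1(n)}). *)
Definition perm_poly (n : nat) (s : 'S_n.+1) (p : {mpoly rat[n]}) : {mpoly rat[n]} :=
  p \mPo [tuple uvar ((s^-1)%g (lift ord0 j)) | j < n].

(* Extension to rational functions: s . (a/b) = (s . a)/(s . b)
   (independent of the representative since s acts by a ring automorphism). *)
Definition act_frac (n : nat) (s : 'S_n.+1) (x : RF n) : RF n :=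
  let r := generic_quotient.repr x in
  tofrac (perm_poly s (frac r).1) / tofrac (perm_poly s (frac r).2).

(* A forest of rooted trees on the vertex set {1,...,n} (vertex k+1 is k : 'I_n)
   given by its parent map: par v = None iff v is a root. *)
Definition is_forest (n : nat) (par : 'I_n -> option 'I_n) : Prop :=
  forall v : 'I_n, iter n (obind par) (Some v) = None.

Definition in_subtree (n : nat) (par : 'I_n -> option 'I_n) (j k : 'I_n) : bool :=
  [exists m : 'I_n, iter m (obind par) (Some k) == Some j].

Definition usub (n : nat) (par : 'I_n -> option 'I_n) (j : 'I_n) : RF n :=
  \sum_(k : 'I_n | in_subtree par j k) tofrac ('X_k : {mpoly rat[n]}).

Definition fF (n : nat) (par : 'I_n -> option 'I_n) : RF n :=
  \prod_(j : 'I_n) (usub par j)^-1.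

(* B_-(T_1) ⊔ B_+(i, T_2, ..., T_k), where i is the root of T_1:
   children of i become roots, i stays a root, the other roots become children of i. *)
Definition newpar (n : nat) (par : 'I_n -> option 'I_n) (i : 'I_n) : 'I_n -> option 'I_n :=
  fun c => if c == i then None else
           match par c with
           | None => Some i
           | Some p => if p == i then None else Some p
           end.

From HB Require Import structures.
From mathcomp Require Import all_boot all_order all_algebra all_fingroup.
From mathcomp Require Import fraction.
From mathcomp Require Import mpoly.
From mathcomp Require Import ring generic_quotient.
Import GRing.Theory.
Local Open Scope ring_scope.

(* The
   transposition of u_0 and u_i substitutes u_i := -(u_1 + ... + u_n) and fixes
   every other u_k.  Since i is a root, no subtree other than its own contains
   it, so every u[T_j] with j <> i is fixed, and these subtrees are unchanged by
   the surgery.  The subtree of i becomes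
   -(u_1 + ... + u_n) + (u[T_1] - u_i) = -(u_i + u[T_2] + ... + u[T_k]),
   which is minus the sum over the new tree B_+(i, T_2, ..., T_k).  Hence exactly
   one sign appears. *)

Lemma iter_period {T : Type} {f : T -> T} {x : T} {a b : nat} :
  (a < b)%N -> iter a f x = iter b f x ->
  forall k, exists2 k', (k' < b)%N & iter k f x = iter k' f x.
Proof.
move=> ltab eqab; elim/ltn_ind=> k IHk.
have [ltkb|lebk] := ltnP k b; first by exists k.
have -> : iter k f x = iter (k - b + a) f x by rewrite -{1}(subnK lebk) !iterD eqab.
by apply: IHk; rewrite -{2}(subnK lebk) ltn_add2l.
Qed.

Section Forest.
Context {n : nat} {par : 'I_n -> option 'I_n}.

Lemma iter_obind_None k : iter k (obind par) None = None.
Proof. by elim: k => //= k ->. Qed.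

Lemma iter_obind_None_mono {x : option 'I_n} {k m} : (k <= m)%N ->
  iter k (obind par) x = None -> iter m (obind par) x = None.
Proof. by move=> lekm Hk; rewrite -(subnK lekm) iterD Hk iter_obind_None. Qed.

(* Pigeonhole: n + 1 ancestors in a set of size n repeat, and a repeating chain
   never reaches [None]. *)
Lemma ancestors_None_within_n v m :
  iter m (obind par) (Some v) = None -> iter n (obind par) (Some v) = None.
Proof.
move=> Hm; case En: (iter n (obind par) (Some v)) => [w|] //; exfalso.
have Hsome (k : 'I_n.+1) : iter k (obind par) (Some v) != None.
  by apply/eqP=> /(iter_obind_None_mono (ltnSE (ltn_ord k))); rewrite En.
pose anc (k : 'I_n.+1) := odflt v (iter k (obind par) (Some v)).
have ancE (k : 'I_n.+1) : iter k (obind par) (Some v) = Some (anc k).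
  by move: (Hsome k); rewrite /anc; case: (iter _ _ _).
have /injectivePn[a [b neqab eqanc]] : ~~ injectiveb anc.
  by apply/injectiveP=> /leq_card; rewrite !card_ord ltnn.
wlog ltab : a b neqab eqanc / (a < b)%N.
  move=> W; case: (ltngtP a b) => [|ltba|/val_inj eqab]; first exact: W.
  - by apply: (W b a); rewrite // eq_sym.
  - by rewrite eqab eqxx in neqab.
have eqab : iter a (obind par) (Some v) = iter b (obind par) (Some v) by rewrite !ancE eqanc.
have [k' ltk'b Ek'] := iter_period ltab eqab m.
by move: (Hsome (Ordinal (ltn_trans ltk'b (ltn_ord b)))); rewrite /= -Ek' Hm.
Qed.

Hypothesis forest_par : is_forest par.

Lemma forest_ind (P : 'I_n -> Prop) :
  (forall k, (forall p, par k = Some p -> P p) -> P k) -> forall k, P k.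
Proof.
move=> step k.
suff IHd d : forall k, iter d (obind par) (Some k) = None -> P k by exact: IHd _ k (forest_par k).
elim: d => [//|d IHd] {}k; rewrite iterSr /= => Hd.
by apply: step => p Ep; apply: IHd; rewrite -Ep.
Qed.

Lemma in_subtreeP j k :
  reflect (exists m, iter m (obind par) (Some k) = Some j) (in_subtree par j k).
Proof.
apply: (iffP existsP) => [[m /eqP Hm]|[m Hm]]; first by exists m.
have ltmn : (m < n)%N.
  rewrite ltnNge; apply/negP=> lenm.
  by move: Hm; rewrite (iter_obind_None_mono lenm (forest_par k)).
by exists (Ordinal ltmn); apply/eqP.
Qed.

Lemma in_subtreeE j k :
  in_subtree par j k = (k == j) || (if par k is Some p then in_subtree par j p else false).
Proof.
apply/(in_subtreeP j k)/idP => [[[|m]]|].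
- by case=> ->; rewrite eqxx.
- rewrite iterSr /=; case: (par k) => [p Hm|]; last by rewrite iter_obind_None.
  by apply/orP; right; apply/in_subtreeP; exists m.
case/orP=> [/eqP->|]; first by exists 0.
case Ek: (par k) => [p|//] /in_subtreeP[m Hm].
by exists m.+1; rewrite iterSr /= Ek.
Qed.

Lemma in_subtree_refl j : in_subtree par j j.
Proof. by rewrite in_subtreeE eqxx. Qed.

Lemma in_subtree_root j r : par r = None -> in_subtree par j r = (r == j).
Proof. by move=> Er; rewrite in_subtreeE Er orbF. Qed.

End Forest.

Section NewForest.
Variables (n : nat) (par : 'I_n -> option 'I_n) (i : 'I_n).
Hypotheses (forest_par : is_forest par) (root_i : par i = None).

Local Notation par' := (newpar par i).

Lemma newpar_root : par' i = None.
Proof. by rewrite /newpar eqxx. Qed.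

Lemma newpar_graft {k} : k != i -> par k = None -> par' k = Some i.
Proof. by move=> /negbTE neqki Ek; rewrite /newpar neqki Ek. Qed.

Lemma newpar_reroot {k} : k != i -> par k = Some i -> par' k = None.
Proof. by move=> /negbTE neqki Ek; rewrite /newpar neqki Ek eqxx. Qed.

Lemma newpar_keep {k p} : k != i -> par k = Some p -> p != i -> par' k = Some p.
Proof. by move=> /negbTE neqki Ek /negbTE neqpi; rewrite /newpar neqki Ek neqpi. Qed.

Lemma newpar_forest : is_forest par'.
Proof.
move=> v; suff [m Hm] : exists m, iter m (obind par') (Some v) = None.
  exact: ancestors_None_within_n Hm.
elim/(forest_ind forest_par): v => v IHv.
have [->|neqvi] := eqVneq v i; first by exists 1; rewrite /= newpar_root.
case Ev: (par v) => [p|]; last by exists 2; rewrite /= newpar_graft //= newpar_root.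
have [eqpi|neqpi] := eqVneq p i.
  by exists 1; rewrite /= newpar_reroot // -eqpi.
have [m Hm] := IHv p Ev.
by exists m.+1; rewrite iterSr /= (newpar_keep neqvi Ev neqpi).
Qed.

Lemma in_subtree_newpar j k : j != i -> in_subtree par' j k = in_subtree par j k.
Proof.
move=> neqji.
have notSji : in_subtree par j i = false.
  by rewrite (in_subtree_root forest_par) // eq_sym (negbTE neqji).
have notSji' : in_subtree par' j i = false.
  by rewrite (in_subtree_root newpar_forest) ?newpar_root // eq_sym (negbTE neqji).
elim/(forest_ind forest_par): k => k IHk.
have [->|neqki] := eqVneq k i; first by rewrite notSji notSji'.
rewrite (in_subtreeE newpar_forest) (in_subtreeE forest_par).
case Ek: (par k) => [p|]; last by rewrite (newpar_graft neqki Ek) notSji'.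
have [eqpi|neqpi] := eqVneq p i.
  by subst p; rewrite (newpar_reroot neqki Ek) notSji.
by rewrite (newpar_keep neqki Ek neqpi) IHk.
Qed.

Lemma in_subtree_newpar_root k : in_subtree par' i k = (k == i) || ~~ in_subtree par i k.
Proof.
have Sii := in_subtree_refl forest_par i.
have Sii' := in_subtree_refl newpar_forest i.
elim/(forest_ind forest_par): k => k IHk.
have [->|neqki] := eqVneq k i; first by rewrite Sii'.
rewrite (in_subtreeE newpar_forest) (in_subtreeE forest_par) (negbTE neqki) /=.
case Ek: (par k) => [p|]; last by rewrite (newpar_graft neqki Ek) Sii'.
have [eqpi|neqpi] := eqVneq p i.
  by subst p; rewrite (newpar_reroot neqki Ek) Sii.
by rewrite (newpar_keep neqki Ek neqpi) IHk // (negbTE neqpi).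
Qed.

End NewForest.

Lemma comp_mpolyA (n k l : nat) (p : {mpoly rat[n]}) (t : n.-tuple {mpoly rat[k]})
    (t' : k.-tuple {mpoly rat[l]}) :
  (p \mPo t) \mPo t' = p \mPo [tuple tnth t j \mPo t' | j < n].
Proof.
rewrite [p \mPo t]comp_mpolyEX [RHS]comp_mpolyEX raddf_sum /=; apply: eq_bigr => m _.
rewrite comp_mpolyZ !comp_mpolyX rmorph_prod /=; congr (_ *: _); apply: eq_bigr => j _.
by rewrite rmorphXn tnth_mktuple.
Qed.

Lemma fraction_piE {R : idomainType} (r : {ratio R}) :
  \pi_({fraction R})%qT r = tofrac (frac r).1 / tofrac (frac r).2.
Proof.
have nzd := denom_ratioP r.
apply: (mulIf (x := tofrac (frac r).2)); first by rewrite tofrac_eq0.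
rewrite divfK ?tofrac_eq0 //; unlock tofrac.
change (FracField.mul (\pi_({fraction R})%qT r) (\pi_({fraction R})%qT (Ratio (frac r).2 1))
  = \pi_({fraction R})%qT (Ratio (frac r).1 1)).
rewrite -FracField.pi_mul; apply/eqmodP.
rewrite /= FracField.equivfE /FracField.mulf !numden_Ratio ?mulf_neq0 ?oner_neq0 //.
by rewrite !mulr1 mulrC eqxx.
Qed.

HB.instance Definition _ (n : nat) (s : 'S_n.+1) :=
  GRing.RMorphism.copy (perm_poly s) (comp_mpoly [tuple uvar ((s^-1)%g (lift ord0 j)) | j < n]).

Lemma act_fracE (n : nat) (s : 'S_n.+1) (a b : {mpoly rat[n]}) :
  injective (perm_poly s) -> b != 0 ->
  act_frac s (tofrac a / tofrac b) = tofrac (perm_poly s a) / tofrac (perm_poly s b).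
Proof.
move=> inj_s nzb; rewrite /act_frac.
set x := tofrac a / tofrac b; have := fraction_piE (repr x); rewrite reprK.
set c := (frac (repr x)).1; set d := (frac (repr x)).2 => Ex.
have nzd : d != 0 := denom_ratioP _.
have perm_poly_neq0 q : q != 0 -> perm_poly s q != 0.
  by apply: contra => /eqP Eq; apply/eqP/inj_s; rewrite Eq rmorph0.
have Ead : a * d = c * b.
  by apply/eqP; move/eqP: Ex; rewrite eqr_div ?tofrac_eq0 // -!tofracM tofrac_eq eq_sym.
apply/eqP; rewrite eqr_div ?tofrac_eq0 ?perm_poly_neq0 // -!tofracM tofrac_eq.
by rewrite -!rmorphM Ead.
Qed.

Section Transposition.
Variables (n : nat) (i : 'I_n).

Local Notation tau := (tperm ord0 (lift ord0 i)).
Local Notation usum := (\sum_(j < n) ('X_j : {mpoly rat[n]})).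

Lemma uvar_tpermV (k : 'I_n) :
  uvar ((tau^-1)%g (lift ord0 k)) = if k == i then - usum else 'X_k.
Proof.
rewrite tpermV /uvar; have [->|neqki] := eqVneq k i; first by rewrite tpermR unlift_none.
by rewrite tpermD ?liftK // ?neq_lift // (inj_eq lift_inj) eq_sym.
Qed.

Lemma perm_poly_tpermX (k : 'I_n) :
  perm_poly tau 'X_k = if k == i then - usum else 'X_k.
Proof. by rewrite /perm_poly comp_mpolyXU -tnth_nth tnth_mktuple uvar_tpermV. Qed.

Lemma perm_poly_tpermK : involutive (perm_poly tau).
Proof.
move=> p; rewrite /perm_poly comp_mpolyA -[RHS]comp_mpoly_id; congr comp_mpoly.
apply: eq_from_tnth => j; rewrite !tnth_mktuple uvar_tpermV -/(perm_poly tau _).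
have [->|neqji] := eqVneq j i; last by rewrite perm_poly_tpermX (negbTE neqji).
rewrite rmorphN rmorph_sum /= (bigD1 i) //= perm_poly_tpermX eqxx.
rewrite (eq_bigr (fun k => 'X_k)) => [|k /negbTE neqki]; last by rewrite perm_poly_tpermX neqki.
by rewrite [X in - (- X + _)](bigD1 i) //= opprD opprK addrK.
Qed.

End Transposition.

Definition subtree_poly {n : nat} (par : 'I_n -> option 'I_n) (j : 'I_n) : {mpoly rat[n]} :=
  \sum_(k | in_subtree par j k) 'X_k.

Lemma fF_subtree_poly (n : nat) (par : 'I_n -> option 'I_n) :
  fF par = (tofrac (\prod_j subtree_poly par j))^-1.
Proof.
rewrite /fF rmorph_prod -prodfV; apply: eq_bigr => j _.
by rewrite /usub /subtree_poly rmorph_sum /=.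
Qed.

Lemma subtree_poly_neq0 (n : nat) (par : 'I_n -> option 'I_n) (j : 'I_n) :
  in_subtree par j j -> subtree_poly par j != 0.
Proof.
move=> Sjj; apply/eqP=> /(congr1 (mcoeff U_(j))).
rewrite mcoeff0 /subtree_poly raddf_sum (bigD1 j) //= mcoeffXU eqxx big1 ?addr0 ?oner_eq0 //.
by move=> k /andP[_ neqkj]; rewrite mcoeffXU (negbTE neqkj).
Qed.

Section SubtreeTransposition.
Variables (n : nat) (par : 'I_n -> option 'I_n) (i : 'I_n).
Hypotheses (forest_par : is_forest par) (root_i : par i = None).

Local Notation tau := (tperm ord0 (lift ord0 i)).
Local Notation par' := (newpar par i).

Lemma perm_poly_tpermU (j : 'I_n) : j != i ->
  perm_poly tau (subtree_poly par j) = subtree_poly par' j.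
Proof.
move=> neqji; rewrite /subtree_poly rmorph_sum /=.
apply: eq_big => [k|k Sjk]; first by rewrite in_subtree_newpar.
rewrite perm_poly_tpermX; have [eqki|//] := eqVneq k i.
by move: Sjk; rewrite eqki (in_subtree_root forest_par) // eq_sym (negbTE neqji).
Qed.

Lemma perm_poly_tpermU_root : perm_poly tau (subtree_poly par i) = - subtree_poly par' i.
Proof.
set inner := \sum_(k | in_subtree par i k && (k != i)) ('X_k : {mpoly rat[n]}).
set outer := \sum_(k | ~~ in_subtree par i k) ('X_k : {mpoly rat[n]}).
have Eall : \sum_(k < n) ('X_k : {mpoly rat[n]}) = 'X_i + inner + outer.
  by rewrite (bigID (in_subtree par i)) /= (bigD1 i) ?in_subtree_refl.
have Eold : perm_poly tau (subtree_poly par i) = - \sum_(k < n) 'X_k + inner.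
  rewrite /subtree_poly rmorph_sum /= (bigD1 i) ?in_subtree_refl //=.
  rewrite perm_poly_tpermX eqxx; congr (_ + _).
  by apply: eq_bigr => k /andP[_ /negbTE neqki]; rewrite perm_poly_tpermX neqki.
have Enew : subtree_poly par' i = 'X_i + outer.
  rewrite /subtree_poly (bigD1 i) ?in_subtree_newpar_root ?eqxx //=; congr (_ + _).
  apply: eq_bigl => k; rewrite in_subtree_newpar_root //.
  by have [->|_] := eqVneq k i; rewrite /= ?andbT ?(in_subtree_refl forest_par).
by rewrite Eold Enew Eall; ring.
Qed.

Lemma perm_poly_tpermU_prod :
  perm_poly tau (\prod_j subtree_poly par j) = - \prod_j subtree_poly par' j.
Proof.
rewrite rmorph_prod /= (bigD1 i) //= perm_poly_tpermU_root.
rewrite [in RHS](bigD1 i) //= mulNr; congr (- (_ * _)).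
by apply: eq_bigr => j neqji; rewrite perm_poly_tpermU.
Qed.

End SubtreeTransposition.

Theorem mainTheorem18 (n : nat) (par : 'I_n -> option 'I_n) (i : 'I_n) :
  is_forest par -> par i = None ->
  is_forest (newpar par i) /\
  act_frac (tperm ord0 (lift ord0 i)) (fF par) = - fF (newpar par i).
Proof.
move=> forest_par root_i; split; first exact: newpar_forest.
have nz_prod : \prod_j subtree_poly par j != 0.
  by apply/prodf_neq0 => j _; apply/subtree_poly_neq0/in_subtree_refl.
rewrite !fF_subtree_poly -div1r -tofrac1.
rewrite act_fracE ?perm_poly_tpermU_prod //; last exact: inv_inj (@perm_poly_tpermK n i).
by rewrite rmorph1 tofracN tofrac1 div1r invrN.
Qed.
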